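(* Let $N,M$ be integers with $0<M<N/2$. Let $\mathbf{Str}_{00}$ (resp. $\mathbf{Str}_{11}$) be the sub-poset of $\mathbf{Str}(N,M)$ of strings $s$ with $s_1=s_N=0$ (resp. $s_1=s_N=1$), and let $\overline{\mathbf{Str}}_{00}$ (resp. $\overline{\mathbf{Str}}_{11}$) be the sub-poset of strings with $(s_1,s_N)\in\{(0,0),(0,X),(X,0)\}$ (resp. $(s_1,s_N)\in\{(1,1),(1,X),(X,1)\}$). Then the geometric realizations of $\mathbf{Str}_{00}$, $\overline{\mathbf{Str}}_{00}$, $\mathbf{Str}_{11}$ and $\overline{\mathbf{Str}}_{11}$ are contractible.
   Context: A circular symbol string of length $N$ is $s=s_1\cdots s_N$ with each $s_i\in\{0,1,X\}$, indices read cyclically modulo $N$; $0,1$ are called bits. A block of $s$ is a maximal cyclic run of consecutive equal symbols. $s$ is a circular cellular string of rank $M$ if it has exactly $M$ blocks of symbol $0$, exactly $M$ blocks of symbol $1$, and every block of symbol $X$ is cyclically preceded and followed by blocks of different bits (one of symbol $0$ and one of symbol $1$). $\mathbf{Str}(N,M)$ is the set of such strings, partially ordered by $s'<s$ iff $s$ is obtained from $s'$ by replacing some (at least one) of the bits of $s'$ by $X$. The geometric realization of a poset is that of its order complex. *)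

From HB Require Import structures.
From mathcomp Require Import all_boot all_order all_algebra.
From mathcomp Require Import all_classical all_reals all_analysis.

Set Implicit Arguments.
Unset Strict Implicit.
Unset Printing Implicit Defensive.

Import Order.TTheory GRing.Theory Num.Theory.
Import numFieldNormedType.Exports.

Inductive sym := S0 | S1 | SX.

Definition sym_code (a : sym) : 'I_3 :=
  match a with
  | S0 => @Ordinal 3 0 isT | S1 => @Ordinal 3 1 isT | SX => @Ordinal 3 2 isT end.
Definition sym_decode (i : 'I_3) : sym :=
  match val i with 0 => S0 | 1 => S1 | _ => SX end.
Lemma sym_codeK : cancel sym_code sym_decode.
Proof. by case. Qed.
HB.instance Definition _ := Equality.copy sym (can_type sym_codeK).
HB.instance Definition _ := Finite.copy sym (can_type sym_codeK).

Definition is_bit (a : sym) : bool := a != SX.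

Section Strings.
Variable N : nat.
Implicit Types s : N.-tuple sym.

(* cyclic access, positions numbered 0..N-1 (paper's s_1 .. s_N) *)
Definition cyc s (k : nat) : sym := nth SX s (k %% N).

(* number of blocks (maximal cyclic runs) of symbol a: the whole string if it
   is constant equal to a, otherwise the number of positions where a run of a
   starts (s_i = a and s_{i-1} <> a cyclically) *)
Definition nblocks (a : sym) s : nat :=
  if (0 < N) && all (fun c => c == a) s then 1
  else count (fun i => (cyc s i == a) && (cyc s (i + N - 1) != a)) (iota 0 N).

Definition xblock s (i len : nat) : bool :=
  [&& cyc s (i + N - 1) != SX, all (fun k => cyc s (i + k) == SX) (iota 0 len)
    & cyc s (i + len) != SX].

(* every X-block is cyclically preceded and followed by blocks of different
   bits (in particular the string is not entirely made of X's) *)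
Definition xblocks_ok s : bool :=
  has is_bit s &&
  all (fun i => all (fun len => xblock s i len ==>
                      (cyc s (i + N - 1) != cyc s (i + len))) (iota 1 N))
      (iota 0 N).

Definition is_Str (M : nat) s : bool :=
  [&& nblocks S0 s == M, nblocks S1 s == M & xblocks_ok s].

Definition str_le (s' s : N.-tuple sym) : bool :=
  [forall i : 'I_N, (tnth s' i == tnth s i) || (is_bit (tnth s' i) && (tnth s i == SX))].

Definition sfirst s : sym := nth SX s 0.
Definition slast s : sym := nth SX s N.-1.

Definition Str00 M s : bool := [&& is_Str M s, sfirst s == S0 & slast s == S0].
Definition Str11 M s : bool := [&& is_Str M s, sfirst s == S1 & slast s == S1].
Definition Str00bar M s : bool :=
  is_Str M s && ((sfirst s, slast s) \in [:: (S0, S0); (S0, SX); (SX, S0)]).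
Definition Str11bar M s : bool :=
  is_Str M s && ((sfirst s, slast s) \in [:: (S1, S1); (S1, SX); (SX, S1)]).
End Strings.

Local Open Scope classical_set_scope.
Local Open Scope ring_scope.

(* The geometric realization of the order complex of the finite poset
   (Q, le), Q a subset of a finite type T: points are barycentric coordinate
   functions x : T -> R, nonnegative, summing to 1, supported in Q, whose
   support is a chain of (Q, le). *)
Definition realization (R : realType) (T : finType) (Q : pred T) (le : rel T)
  : set (prod_topology (fun _ : T => (R : topologicalType))) :=
  [set x | (forall t, 0 <= x t) /\ (forall t, ~~ Q t -> x t = 0) /\
           \sum_(t : T) x t = 1 /\
           (forall t u, x t != 0 -> x u != 0 -> le t u || le u t)].

Definition contractible (R : realType) (X : topologicalType) (A : set X) : Prop :=
  exists x0, A x0 /\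
  exists H : X * R -> X,
    {within A `*` `[0, 1], continuous H} /\
    (forall x t, A x -> 0 <= t <= 1 -> A (H (x, t))) /\
    (forall x, A x -> H (x, 0) = x /\ H (x, 1) = x0).

From mathcomp Require Import all_boot all_order all_algebra.
From mathcomp Require Import all_classical all_reals all_analysis.
From mathcomp Require Import lra zify.

Set Implicit Arguments.
Unset Strict Implicit.
Unset Printing Implicit Defensive.

Import Order.TTheory GRing.Theory Num.Theory.
Import numFieldNormedType.Exports.

(* A string s with both ends in {b, X}, positions 0..N-1, is encoded by its
   level function d: d i is twice the number of bit blocks starting in
   positions 1..i, plus one if s_i = X, and s_i is read back from d i mod 4
   (X when odd, b at 0, the other bit at 2).  The block conditions say exactly
   that d climbs from d 0 in {0, 1} to d (N-1) in {4M-1, 4M} by steps of at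
   most 2, and at most 1 from an odd level, while s' <= s forces the levels to
   agree except where s has an X, where they may differ by one.  Hence the maps
   H_m replacing d i by max (d i) (min (2 i) m) are monotone, H_0 = id, H_m and
   H_(m+1) are comparable (alternately <= and >=), and H_(4M) lies above the
   staircase string with levels min (2 i) (4M), which exists as 2M < N.
   Comparable monotone maps induce homotopic maps of the realization, by pushing
   the lower part of the mass of each chain along one map and the rest along
   the other; so the identity is homotopic to a constant. *)

(** * Homotopies of the realization of an order complex *)

Section Realizations.
Local Open Scope classical_set_scope.
Local Open Scope ring_scope.

Section PairContinuity.
Variables U V : topologicalType.

Lemma continuous_fst : continuous (fst : U * V -> U).
Proof. by case=> u v; exact: (@cvg_fst U V (nbhs u) (nbhs v) _). Qed.

Lemma continuous_snd : continuous (snd : U * V -> V).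
Proof. by case=> u v; exact: (@cvg_snd U V (nbhs u) (nbhs v) _). Qed.

End PairContinuity.

Section ProductContinuity.
Variables (R : realType) (T : finType) (Z : topologicalType).
Local Notation X := (prod_topology (fun _ : T => (R : topologicalType))).

Lemma ptws_cvg (F : set_system X) (f : X) :
  Filter F -> (forall t, (fun g : X => g t) @ F --> f t) -> F --> f.
Proof.
move=> FF cvg_coord; apply/cvg_sup => t.
rewrite cvg_image; last by rewrite eqEsubset; split=> v // _; exists (fun _ => v).
move=> W /cvg_coord; rewrite /= nbhs_simpl => W_near.
exists (fun g => W (g t)) => //.
by rewrite eqEsubset; split=> [v [g Wg <-] // | v Wv]; exists (fun _ => v).
Qed.

Lemma continuous_ptws (H : Z -> X) : (forall t, continuous (fun z => H z t)) -> continuous H.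
Proof. by move=> Hc z; apply: ptws_cvg => t; exact: Hc. Qed.

Lemma continuous_coord (H : Z -> X) t : continuous H -> continuous (fun z => H z t).
Proof.
move=> Hc z; apply: (@continuous_comp Z X R H (fun x : X => x t)); first exact: Hc.
exact: (@proj_continuous T (fun _ : T => (R : topologicalType)) t).
Qed.

End ProductContinuity.

Section RealContinuity.
Variables (R : realType) (Z : topologicalType).
Implicit Types f g : Z -> R.

Lemma continuous_addR f g : continuous f -> continuous g -> continuous (fun z => f z + g z).
Proof. by move=> fc gc z; exact: (@continuousD R R^o Z f g z (fc z) (gc z)). Qed.

Lemma continuous_subR f g : continuous f -> continuous g -> continuous (fun z => f z - g z).
Proof. by move=> fc gc z; exact: (@continuousB R R^o Z f g z (fc z) (gc z)). Qed.

Lemma continuous_mulR f g : continuous f -> continuous g -> continuous (fun z => f z * g z).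
Proof. by move=> fc gc z; exact: (@continuousM R Z f g z (fc z) (gc z)). Qed.

Lemma continuous_minR f g :
  continuous f -> continuous g -> continuous (fun z => Num.min (f z) (g z)).
Proof. by move=> fc gc z; exact: (continuous_min (fc z) (gc z)). Qed.

Lemma continuous_maxR f g :
  continuous f -> continuous g -> continuous (fun z => Num.max (f z) (g z)).
Proof. by move=> fc gc z; exact: (continuous_max (fc z) (gc z)). Qed.

Lemma continuous_sumR (I : Type) (r : seq I) (P : pred I) (F : I -> Z -> R) :
  (forall i, continuous (F i)) -> continuous (fun z => \sum_(i <- r | P i) F i z).
Proof.
move=> Fc; elim: r => [|i r IH]; first by under eq_fun do rewrite big_nil; exact: cst_continuous.
under eq_fun do rewrite big_cons.
by case: (P i) => //; apply: continuous_addR.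
Qed.

End RealContinuity.

Section Homotopy.
Variables (R : realType) (T : finType).
Local Notation X := (prod_topology (fun _ : T => (R : topologicalType))).
Variable A : set X.

Definition homotopic (F G : X -> X) := exists H : X * R -> X, [/\ continuous H,
  forall x t, A x -> 0 <= t <= 1 -> A (H (x, t)) &
  forall x, A x -> H (x, 0) = F x /\ H (x, 1) = G x].

Lemma continuous_reparam (H : X * R -> X) (c : X * R -> R) :
  continuous H -> continuous c -> continuous (fun z => H (z.1, c z)).
Proof.
move=> Hc cc z; apply: (@continuous_comp _ _ _ (fun z => (z.1, c z)) H); last exact: Hc.
exact: (@cvg_pair _ _ _ (nbhs z) (nbhs z.1) (nbhs (c z)) _ _ _ fst c
  (@continuous_fst X R z) (cc z)).
Qed.

Lemma homotopic_sym F G : homotopic F G -> homotopic G F.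
Proof.
case=> H [Hc HA Hends]; exists (fun z => H (z.1, 1 - z.2)); split.
- apply: continuous_reparam => //; apply: continuous_subR; first exact: cst_continuous.
  exact: continuous_snd.
- move=> x t Ax /andP[t0 t1]; apply: HA => //.
  by rewrite subr_ge0 t1 lerBlDr lerDl t0.
- by move=> x Ax; rewrite /= subr0 subrr; have [-> ->] := Hends x Ax.
Qed.

(* No pasting lemma is needed: for [t <= 1/2] the last two terms cancel since
   [H2 (x, 0) = G x = H1 (x, 1)], and for [t >= 1/2] the first and last cancel. *)
Definition concat_homotopy (H1 H2 : X * R -> X) (z : X * R) : X := fun u =>
  H1 (z.1, Num.min 1 (2 * z.2)) u + H2 (z.1, Num.max 0 (2 * z.2 - 1)) u - H1 (z.1, 1) u.

Lemma concat_homotopy_continuous H1 H2 :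
  continuous H1 -> continuous H2 -> continuous (concat_homotopy H1 H2).
Proof.
move=> H1c H2c; have double_c : continuous (fun z : X * R => 2 * z.2).
  by apply: continuous_mulR; [exact: cst_continuous | exact: continuous_snd].
apply: continuous_ptws => u; apply: continuous_subR; first apply: continuous_addR.
- apply: (continuous_coord (H := fun z => H1 (z.1, _))); apply: continuous_reparam => //.
  by apply: continuous_minR => //; exact: cst_continuous.
- apply: (continuous_coord (H := fun z => H2 (z.1, _))); apply: continuous_reparam => //.
  apply: continuous_maxR; first exact: cst_continuous.
  by apply: continuous_subR => //; exact: cst_continuous.
- apply: (continuous_coord (H := fun z => H1 (z.1, 1))).
  by apply: continuous_reparam => //; exact: cst_continuous.
Qed.

Lemma homotopic_trans F G K : homotopic F G -> homotopic G K -> homotopic F K.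
Proof.
case=> H1 [H1c H1A H1ends] [H2 [H2c H2A H2ends]].
exists (concat_homotopy H1 H2); split; first exact: concat_homotopy_continuous.
- move=> x t Ax /andP[t0 t1]; have [_ G1] := H1ends x Ax; have [G2 _] := H2ends x Ax.
  rewrite /concat_homotopy /=; have [le_t_half|lt_half_t] := lerP t (2^-1).
    have -> : Num.max 0 (2 * t - 1) = 0 by apply/max_idPl; lra.
    rewrite G1 G2 (_ : (fun u => _) = H1 (x, Num.min 1 (2 * t))).
      apply: H1A => //; apply/andP; split; last by rewrite ge_min lexx.
      by rewrite le_min; apply/andP; split; lra.
    by apply: funext => u; rewrite addrK.
  have -> : Num.min 1 (2 * t) = 1 by apply/min_idPl; lra.
  rewrite (_ : (fun u => _) = H2 (x, Num.max 0 (2 * t - 1))).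
    apply: H2A => //; apply/andP; split; first by rewrite le_max lexx.
    by rewrite ge_max; apply/andP; split; lra.
  by apply: funext => u; rewrite addrC addKr.
- move=> x Ax; have [F1 G1] := H1ends x Ax; have [G2 K2] := H2ends x Ax.
  rewrite /concat_homotopy /= mulr0 mulr1 sub0r.
  have -> : Num.min 1 0 = 0 :> R by apply/min_idPr; lra.
  have -> : Num.max 0 (-1) = 0 :> R by apply/max_idPl; lra.
  have -> : Num.min 1 2 = 1 :> R by apply/min_idPl; lra.
  have -> : Num.max 0 (2 - 1) = 1 :> R by rewrite (_ : 2 - 1 = 1) ?(max_idPr _) //; lra.
  by rewrite F1 G2 K2 -G1; split; apply: funext => u; rewrite ?addrK // addrC addKr.
Qed.

Lemma homotopic_congr F F' G G' : (forall x, A x -> F x = F' x) ->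
  (forall x, A x -> G x = G' x) -> homotopic F G -> homotopic F' G'.
Proof.
move=> FF' GG' [H [Hc HA Hends]]; exists H; split => // x Ax.
by have [-> ->] := Hends x Ax; rewrite FF' ?GG'.
Qed.

Lemma contractible_homotopic_const x0 : A x0 -> homotopic id (fun => x0) -> contractible R A.
Proof.
move=> Ax0 [H [Hc HA Hends]]; exists x0; split => //; exists H; split => //.
exact: continuous_subspaceT.
Qed.

End Homotopy.

Section Pushforward.
Variables (R : realType) (T : finType) (Q : pred T) (le : rel T).
Hypotheses (le_trans : transitive le) (le_anti : antisymmetric le).
Local Notation X := (prod_topology (fun _ : T => (R : topologicalType))).
Local Notation A := (realization Q le).

Definition pushforward (f : T -> T) (x : X) : X := fun u => \sum_t (if f t == u then x t else 0).

Definition dirac (c : T) : X := fun u => if u == c then 1 else 0.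

Lemma sum_if_eq (c : T) (a : T -> R) : \sum_u (if c == u then a u else 0) = a c.
Proof. by rewrite -big_mkcond /= (big_pred1 c) // => u /=; rewrite eq_sym. Qed.

Lemma sumr_neq0_exists (F : T -> R) : \sum_t F t != 0 -> exists t, F t != 0.
Proof.
move=> nz; apply/existsP; apply: contraNT nz; rewrite negb_exists => /forallP F0.
by apply/eqP/big1 => t _; apply/eqP/negPn/F0.
Qed.

Section InRealization.
Variable x : X.
Hypothesis Ax : A x.

Lemma realization_ge0 t : 0 <= x t. Proof. by case: Ax. Qed.

Lemma realization_support t : x t != 0 -> Q t.
Proof. by case: Ax => _ [Qx _] xt; apply/negPn; apply: contra xt => /Qx ->. Qed.

Lemma realization_sum : \sum_t x t = 1. Proof. by case: Ax => _ [_ []]. Qed.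

Lemma realization_chain t u : x t != 0 -> x u != 0 -> le t u || le u t.
Proof. by case: Ax => _ [_ [_]]; apply. Qed.

Lemma realization_chain_map (h : T -> T) t u :
  (forall t t', Q t -> Q t' -> le t t' -> le (h t) (h t')) ->
  x t != 0 -> x u != 0 -> le (h t) (h u) || le (h u) (h t).
Proof.
move=> h_mono xt xu; have [Qt Qu] := (realization_support xt, realization_support xu).
by apply/orP; case/orP: (realization_chain xt xu) => le_tu; [left | right]; apply: h_mono.
Qed.

Lemma pushforward_id : pushforward id x = x.
Proof. by apply: funext => u; rewrite /pushforward -big_mkcond /= big_pred1_eq. Qed.

Lemma pushforward_eq_in f g : (forall t, Q t -> f t = g t) -> pushforward f x = pushforward g x.
Proof.
move=> fg; apply: funext => u; apply: eq_bigr => t _.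
by have [->|/realization_support Qt] := eqVneq (x t) 0; [case: ifP; case: ifP | rewrite fg].
Qed.

Lemma pushforward_const c : pushforward (fun => c) x = dirac c.
Proof.
apply: funext => u; rewrite /pushforward /dirac eq_sym.
by case: (u == c); [exact: realization_sum | exact: big1].
Qed.

End InRealization.

Lemma realization_dirac c : Q c -> le c c -> A (dirac c).
Proof.
move=> Qc le_cc; rewrite /dirac; split; first by move=> t; case: ifP.
split; first by move=> t; case: eqP => // ->; rewrite Qc.
split; first by rewrite -big_mkcond /= big_pred1_eq.
move=> t u; have [-> _|_] := eqVneq t c; last by rewrite eqxx.
by have [-> _|_] := eqVneq u c; rewrite ?le_cc ?eqxx.
Qed.

Definition mass_below (x : X) t : R := \sum_(w | (w != t) && le w t) x w.

(* Stacking the masses of a chain in increasing order, the part of [x t] below height [1 - s]. *)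
Definition lower_mass (x : X) (s : R) t : R := Num.max 0 (Num.min (x t) (1 - s - mass_below x t)).

Section MassBelow.
Variable x : X.
Hypothesis Ax : A x.

Lemma mass_below_ge0 t : 0 <= mass_below x t.
Proof. by apply: sumr_ge0 => w _; exact: realization_ge0. Qed.

Lemma mass_below_le t : mass_below x t + x t <= 1.
Proof.
rewrite -(realization_sum Ax) (bigID (fun w => (w != t) && le w t)) /= lerD2l.
rewrite (bigD1 t) /=; last by rewrite eqxx.
by rewrite lerDl; apply: sumr_ge0 => w _; exact: realization_ge0.
Qed.

Lemma mass_below_lt t t' : t' != t -> le t' t -> mass_below x t' + x t' <= mass_below x t.
Proof.
move=> ne_t't le_t't; rewrite /mass_below -[x t'](sum_if_eq t') !big_mkcond /=.
rewrite -big_split [X in _ <= X]big_mkcond /=; apply: ler_sum => w _.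
have [<- | ne_t'w] := eqVneq t' w; first by rewrite /= ne_t't le_t't add0r.
rewrite addr0 /=; case: ifP => [le_wt'|_]; last by case: ifP => // _; exact: realization_ge0.
have [eq_wt|] := eqVneq w t; last by rewrite (le_trans le_wt').
have eq_t't : t' = t by apply: le_anti; rewrite le_t't -eq_wt le_wt'.
by rewrite eq_t't eq_wt eqxx in ne_t'w.
Qed.

Lemma lower_mass_ge0 s t : 0 <= lower_mass x s t.
Proof. by rewrite /lower_mass le_max lexx. Qed.

Lemma lower_mass_le s t : lower_mass x s t <= x t.
Proof. by rewrite /lower_mass ge_max realization_ge0 // ge_min lexx. Qed.

Lemma lower_mass_eq0 s t : x t = 0 -> lower_mass x s t = 0.
Proof. by move=> xt0; apply/eqP; rewrite eq_le lower_mass_ge0 -xt0 lower_mass_le. Qed.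

Lemma lower_mass_neq0 s t : lower_mass x s t != 0 -> x t != 0 /\ mass_below x t < 1 - s.
Proof.
move=> nz; split; first by apply: contra nz => /eqP/(lower_mass_eq0 s)/eqP.
move: nz; rewrite /lower_mass ltNge; apply: contra => le_s.
by apply/eqP/max_idPl; rewrite ge_min; apply/orP; right; rewrite subr_le0.
Qed.

Lemma upper_mass_neq0 s t :
  x t - lower_mass x s t != 0 -> x t != 0 /\ 1 - s < mass_below x t + x t.
Proof.
move=> nz; split; first by apply: contra nz => /eqP xt0; rewrite lower_mass_eq0 // xt0 subrr.
move: nz; rewrite ltNge; apply: contra => le_sum.
have le_x : x t <= 1 - s - mass_below x t by lra.
by rewrite /lower_mass (min_idPl le_x) (max_idPr (realization_ge0 Ax t)) subrr.
Qed.

End MassBelow.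

Section PushHomotopy.
Variables g f : T -> T.
Hypotheses (g_Q : forall t, Q t -> Q (g t)) (f_Q : forall t, Q t -> Q (f t)).
Hypotheses (g_mono : forall t t', Q t -> Q t' -> le t t' -> le (g t) (g t'))
           (f_mono : forall t t', Q t -> Q t' -> le t t' -> le (f t) (f t')).
Hypothesis le_gf : forall t, Q t -> le (g t) (f t).

(* At time [s], the mass of each chain lying below height [1 - s] is pushed by [g],
   the rest by [f]. *)
Definition push_homotopy (z : X * R) : X := fun u =>
  \sum_t ((if g t == u then lower_mass z.1 z.2 t else 0) +
          (if f t == u then z.1 t - lower_mass z.1 z.2 t else 0)).

Lemma push_homotopy_continuous : continuous push_homotopy.
Proof.
have x_c t : continuous (fun z : X * R => z.1 t).
  by apply: (continuous_coord (H := fst)); exact: continuous_fst.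
have lower_c t : continuous (fun z : X * R => lower_mass z.1 z.2 t).
  apply: continuous_maxR; first exact: cst_continuous.
  apply: continuous_minR => //; apply: continuous_subR; last exact: continuous_sumR.
  by apply: continuous_subR; [exact: cst_continuous | exact: continuous_snd].
apply: continuous_ptws => u; apply: continuous_sumR => t; apply: continuous_addR.
  by case: (g t == u) => //; exact: cst_continuous.
by case: (f t == u); [exact: continuous_subR | exact: cst_continuous].
Qed.

Lemma push_homotopy_ends x : A x ->
  push_homotopy (x, 0) = pushforward g x /\ push_homotopy (x, 1) = pushforward f x.
Proof.
move=> Ax; split; apply: funext => u; apply: eq_bigr => t _ /=.
  have -> : lower_mass x 0 t = x t.
    rewrite /lower_mass subr0 (min_idPl _) ?(max_idPr (realization_ge0 Ax t)) //.
    by rewrite lerBrDl mass_below_le.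
  by rewrite subrr; case: (f t == u); rewrite addr0.
have -> : lower_mass x 1 t = 0.
  apply/max_idPl; rewrite ge_min subrr sub0r oppr_le0 mass_below_ge0 //.
  by rewrite orbT.
by rewrite subr0; case: (g t == u); rewrite add0r.
Qed.

Lemma push_homotopy_support x s u : A x -> push_homotopy (x, s) u != 0 ->
  exists t, [\/ u = g t /\ lower_mass x s t != 0 | u = f t /\ x t - lower_mass x s t != 0].
Proof.
move=> Ax /sumr_neq0_exists[t nz]; exists t; move: nz.
have [->|_] := eqVneq (g t) u; have [->|_] := eqVneq (f t) u; rewrite ?addr0 ?add0r ?eqxx //.
- by have [->|] := eqVneq (lower_mass x s t) 0; rewrite ?add0r => nz; [right | left].
- by left.
- by right.
Qed.

Lemma le_lower_upper x s t t' : A x -> lower_mass x s t != 0 -> x t' - lower_mass x s t' != 0 ->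
  le (g t) (f t').
Proof.
move=> Ax /(lower_mass_neq0 Ax)[xt below_t] /(upper_mass_neq0 Ax)[xt' above_t'].
have [Qt Qt'] := (realization_support Ax xt, realization_support Ax xt').
case/orP: (realization_chain Ax xt xt') => [le_tt'|le_t't].
  exact: le_trans (g_mono Qt Qt' le_tt') (le_gf Qt').
have [eq_t't|ne_t't] := eqVneq t' t; first by rewrite -eq_t't le_gf.
have := mass_below_lt Ax ne_t't le_t't; lra.
Qed.

Lemma push_homotopy_chain x s u u' : A x ->
  push_homotopy (x, s) u != 0 -> push_homotopy (x, s) u' != 0 -> le u u' || le u' u.
Proof.
move=> Ax /(push_homotopy_support Ax)[t Ht] /(push_homotopy_support Ax)[t' Ht'].
case: Ht => -[-> nz]; case: Ht' => -[-> nz'].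
- exact: realization_chain_map g_mono (lower_mass_neq0 Ax nz).1 (lower_mass_neq0 Ax nz').1.
- by rewrite (le_lower_upper Ax nz nz').
- by rewrite (le_lower_upper Ax nz' nz) orbT.
- exact: realization_chain_map f_mono (upper_mass_neq0 Ax nz).1 (upper_mass_neq0 Ax nz').1.
Qed.

Lemma push_homotopy_realization x s : A x -> A (push_homotopy (x, s)).
Proof.
move=> Ax; split.
  move=> u; apply: sumr_ge0 => t _; apply: addr_ge0; case: ifP => // _.
    exact: lower_mass_ge0.
  by rewrite subr_ge0 lower_mass_le.
split.
  move=> u Qu; apply: big1 => t _ /=.
  have [xt0|xt] := eqVneq (x t) 0.
    by rewrite lower_mass_eq0 // xt0 subrr; case: ifP; case: ifP; rewrite ?addr0.
  have Qt := realization_support Ax xt.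
  by rewrite !ifF ?addr0 //; apply: contraNF Qu => /eqP <-; [apply: f_Q | apply: g_Q].
split; last by move=> u u'; apply: push_homotopy_chain.
rewrite exchange_big /= -(realization_sum Ax); apply: eq_bigr => t _.
by rewrite big_split /= !sum_if_eq addrC subrK.
Qed.

Lemma homotopic_pushforward : homotopic A (pushforward g) (pushforward f).
Proof.
exists push_homotopy; split; first exact: push_homotopy_continuous.
  by move=> x s Ax _; exact: push_homotopy_realization.
exact: push_homotopy_ends.
Qed.

End PushHomotopy.

End Pushforward.

Section ZigzagContraction.
Variables (R : realType) (T : finType) (Q : pred T) (le : rel T).
Hypotheses (le_refl : reflexive le) (le_trans : transitive le) (le_anti : antisymmetric le).
Variables (h : nat -> T -> T) (n : nat) (c : T).
Hypotheses (h_Q : forall k t, Q t -> Q (h k t))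
  (h_mono : forall k t t', Q t -> Q t' -> le t t' -> le (h k t) (h k t'))
  (h0 : forall t, Q t -> h 0 t = t) (hn : forall t, Q t -> h n t = c) (Qc : Q c)
  (h_zigzag : forall k, (k < n)%N ->
     (forall t, Q t -> le (h k t) (h k.+1 t)) \/ (forall t, Q t -> le (h k.+1 t) (h k t))).

Local Notation A := (@realization R T Q le).

Lemma realization_contractible_zigzag : contractible R A.
Proof.
have push_le k k' : (forall t, Q t -> le (h k t) (h k' t)) ->
    homotopic A (pushforward (h k)) (pushforward (h k')).
  exact: (homotopic_pushforward R le_trans le_anti (h_Q k) (h_Q k') (h_mono k) (h_mono k')).
have homotopic_h k : (k <= n)%N -> homotopic A (pushforward (h 0)) (pushforward (h k)).
  elim: k => [_|k IH lt_kn]; first by apply: push_le => t _; apply: le_refl.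
  apply: homotopic_trans (IH (ltnW lt_kn)) _.
  by case: (h_zigzag lt_kn) => le_h; [|apply: homotopic_sym]; apply: push_le.
apply: (contractible_homotopic_const (realization_dirac R Qc (le_refl c))).
apply: homotopic_congr (homotopic_h n (leqnn n)) => x Ax.
  by rewrite (pushforward_eq_in Ax h0) pushforward_id.
by rewrite (pushforward_eq_in Ax hn) (pushforward_const Ax).
Qed.

End ZigzagContraction.

End Realizations.

(** * Level functions of circular strings *)

Definition sym_le (x y : sym) : bool := (x == y) || (is_bit x && (y == SX)).

Lemma sym_le_refl : reflexive sym_le. Proof. by case. Qed.
Lemma sym_le_trans : transitive sym_le. Proof. by do 3 case. Qed.
Lemma sym_le_anti : antisymmetric sym_le. Proof. by do 2 case. Qed.

Definition flip (a : sym) : sym := match a with S0 => S1 | S1 => S0 | SX => SX end.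

Lemma flipK : involutive flip. Proof. by case. Qed.
Lemma flip_neq a : is_bit a -> flip a != a. Proof. by case: a. Qed.
Lemma is_bit_flip a : is_bit (flip a) = is_bit a. Proof. by case: a. Qed.
Lemma bits_neq_flip y z : is_bit y -> is_bit z -> y != z -> y = flip z.
Proof. by case: y; case: z. Qed.

Lemma bit_change_split b x y : is_bit b ->
  is_bit x && (y != x) = ((x == b) && (y != b)) || ((x == flip b) && (y != flip b)).
Proof. by case: b; case: x; case: y. Qed.

Section StrOrder.
Variable N : nat.
Implicit Types p q r : N.-tuple sym.

Lemma str_leP p q :
  reflect (forall i, i < N -> sym_le (nth SX p i) (nth SX q i)) (str_le p q).
Proof.
apply: (iffP forallP) => [H i ltiN | H i].
  by have := H (Ordinal ltiN); rewrite !(tnth_nth SX).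
by rewrite !(tnth_nth SX); apply: H.
Qed.

Lemma str_le_refl : reflexive (@str_le N).
Proof. by move=> p; apply/forallP => i; apply: sym_le_refl. Qed.

Lemma str_le_trans : transitive (@str_le N).
Proof.
move=> q p r /forallP pq /forallP qr; apply/forallP => i.
exact: sym_le_trans (pq i) (qr i).
Qed.

Lemma str_le_anti : antisymmetric (@str_le N).
Proof.
move=> p q /andP[/forallP pq /forallP qp]; apply: eq_from_tnth => i.
by apply: sym_le_anti; apply/andP; split; [apply: pq | apply: qp].
Qed.

End StrOrder.

Definition level_step a a' := [&& a <= a', a' <= a + 2 & (a %% 2 == 1) ==> (a' <= a + 1)].
Definition level_le a c := (c %% 2 == 1) || (a %% 4 == c %% 4).
Definition level_near a c := (a == c) || ((c %% 2 == 1) && ((a == c.+1) || (a.+1 == c))).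

Lemma level_step_le a a' : level_step a a' -> a <= a'.
Proof. by case/andP. Qed.

Lemma level_path_mono (d : nat -> nat) n :
  (forall i, i < n -> level_step (d i) (d i.+1)) -> forall i j, i <= j <= n -> d i <= d j.
Proof.
move=> st i; elim=> [|j IH] /andP[le_ij le_jn]; first by have -> : i = 0 by lia.
have [-> //|ne] := eqVneq i j.+1.
apply: leq_trans (level_step_le (st j le_jn)); apply: IH; lia.
Qed.

(* Forward induction bounds [e] by [d] from below, backward induction from above. *)
Lemma level_paths_near (d e : nat -> nat) n :
  (forall i, i < n -> level_step (d i) (d i.+1)) ->
  (forall i, i < n -> level_step (e i) (e i.+1)) ->
  (forall i, i <= n -> level_le (d i) (e i)) ->
  e 0 <= d 0 + e 0 %% 2 -> d n <= e n + e n %% 2 ->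
  forall i, i <= n -> level_near (d i) (e i).
Proof.
rewrite /level_step /level_le /level_near => std ste le_de lo0 hin.
have lo i : i <= n -> e i <= d i + e i %% 2.
  elim: i => [//|i IH] lt_in.
  have := std i lt_in; have := ste i lt_in; have := le_de _ lt_in; have := IH (ltnW lt_in).
  lia.
have hi k : k <= n -> d (n - k) <= e (n - k) + e (n - k) %% 2.
  elim: k => [|k IH] lt_kn; first by rewrite subn0.
  have eq_nk : n - k = (n - k.+1).+1 by lia.
  have := std (n - k.+1) ltac:(lia); have := ste (n - k.+1) ltac:(lia).
  have := le_de (n - k.+1) ltac:(lia); have := IH (ltnW lt_kn); rewrite eq_nk.
  lia.
move=> i le_in; have := lo i le_in; have := le_de i le_in.
have := hi (n - i) ltac:(lia); rewrite subKn //.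
lia.
Qed.

Section LevelSymbols.
Variable b : sym.

Definition level_sym v : sym :=
  if v %% 2 == 1 then SX else if v %% 4 == 0 then b else flip b.

Lemma level_symD4 v k : level_sym (v + 4 * k) = level_sym v.
Proof.
rewrite /level_sym; have -> : ((v + 4 * k) %% 2 == 1) = (v %% 2 == 1) by apply/eqP/eqP; lia.
by have -> : ((v + 4 * k) %% 4 == 0) = (v %% 4 == 0) by apply/eqP/eqP; lia.
Qed.

Definition bit_of_parity c : sym := if odd c then flip b else b.

Lemma bit_of_paritySn c : bit_of_parity c.+1 = flip (bit_of_parity c).
Proof. by rewrite /bit_of_parity /=; case: (odd c); rewrite ?flipK. Qed.

(* The number of positive levels at most [v] carrying the bit [a]: levels 4k for [b],
   4k+2 for the other bit. *)
Definition level_index (a : sym) v := if a == b then v %/ 4 else (v + 2) %/ 4.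

Lemma level_index_mono a : {homo level_index a : v w / v <= w}.
Proof. by move=> v w le_vw; rewrite /level_index; case: (a == b); lia. Qed.

Lemma level_sym_cases v :
  [\/ v %% 4 = 0 /\ level_sym v = b, v %% 4 = 2 /\ level_sym v = flip b
    | v %% 2 = 1 /\ level_sym v = SX].
Proof.
rewrite /level_sym; case: ifP => [/eqP v1|/negbT v0]; first by apply: Or33.
by case: ifP => [/eqP v4|/negbT v4]; [apply: Or31 | apply: Or32]; split => //; lia.
Qed.

Lemma level_symX v : v %% 2 = 1 -> level_sym v = SX.
Proof. by case: (level_sym_cases v) => -[v' ->] // v1; lia. Qed.

Lemma level_symb v : v %% 4 = 0 -> level_sym v = b.
Proof. by case: (level_sym_cases v) => -[v' ->] // v0; lia. Qed.

Lemma level_symfb v : v %% 4 = 2 -> level_sym v = flip b.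
Proof. by case: (level_sym_cases v) => -[v' ->] // v2; lia. Qed.

Lemma level_sym_double c : level_sym (2 * c) = bit_of_parity c.
Proof.
rewrite /bit_of_parity; case: (boolP (odd c)) => c_odd; have := modn2 c;
  [rewrite c_odd => ?; apply: level_symfb | rewrite (negbTE c_odd) => ?; apply: level_symb]; lia.
Qed.

Hypothesis b_bit : is_bit b.

Let fb_bit : is_bit (flip b). Proof. by rewrite is_bit_flip. Qed.
Let fb_neq_b : (flip b == b) = false. Proof. exact/negbTE/flip_neq. Qed.

Lemma level_sym_eqX v : (level_sym v == SX) = (v %% 2 == 1).
Proof.
have [[v0 ->]|[v2 ->]|[v1 ->]] := level_sym_cases v; last by rewrite v1.
  by rewrite (negbTE b_bit); apply/esym/negbTE/eqP; lia.
by rewrite (negbTE fb_bit); apply/esym/negbTE/eqP; lia.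
Qed.

Lemma level_sym_eqb v : (level_sym v == b) = (v %% 4 == 0).
Proof.
have [[-> ->]|[-> ->]|[v1 ->]] := level_sym_cases v; rewrite ?eqxx ?fb_neq_b //.
by rewrite eq_sym (negbTE b_bit); apply/esym/negbTE/eqP; lia.
Qed.

Lemma level_sym_eqfb v : (level_sym v == flip b) = (v %% 4 == 2).
Proof.
have [[-> ->]|[-> ->]|[v1 ->]] := level_sym_cases v; rewrite ?eqxx.
- by rewrite eq_sym fb_neq_b.
- by [].
by rewrite eq_sym (negbTE fb_bit); apply/esym/negbTE/eqP; lia.
Qed.

Lemma sym_le_level a c : sym_le (level_sym a) (level_sym c) = level_le a c.
Proof.
rewrite /level_le; have [c_odd|c_even] := boolP (c %% 2 == 1).
  by rewrite (level_symX (eqP c_odd)) /sym_le eqxx andbT; case: (level_sym a).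
have [c0|c2] := boolP (c %% 4 == 0).
  rewrite (level_symb (eqP c0)) /sym_le level_sym_eqb (negbTE b_bit) andbF orbF.
  by apply/eqP/eqP; lia.
rewrite (@level_symfb c); last lia.
rewrite /sym_le level_sym_eqfb (negbTE fb_bit) andbF orbF.
by apply/eqP/eqP; lia.
Qed.

Lemma level_start_index a v v' : (a == b) || (a == flip b) -> level_step v v' ->
  ((level_sym v' == a) && (level_sym v != a) : nat) = level_index a v' - level_index a v.
Proof.
rewrite /level_index /level_step => /orP[/eqP->|/eqP->].
  rewrite eqxx !level_sym_eqb.
  by case: (boolP (v' %% 4 == 0)); case: (boolP (v %% 4 == 0)) => /= *; lia.
rewrite eq_sym fb_neq_b !level_sym_eqfb.
by case: (boolP (v' %% 4 == 2)); case: (boolP (v %% 4 == 2)) => /= *; lia.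
Qed.

Lemma count_level_starts (d : nat -> nat) a n :
  (forall i, i < n -> level_step (d i) (d i.+1)) -> (a == b) || (a == flip b) ->
  count (fun j => (level_sym (d j) == a) && (level_sym (d j.-1) != a)) (iota 1 n)
  = level_index a (d n) - level_index a (d 0).
Proof.
move=> st ab; elim: n st => [|n IH] st; first by rewrite subnn.
have -> : iota 1 n.+1 = rcons (iota 1 n) n.+1 by rewrite -cats1 -(addn1 n) iotaD addnC.
rewrite -cats1 count_cat /= addn0 IH => [|i lt_in]; last by apply: st; lia.
rewrite (level_start_index ab (st n (ltnSn n))).
have := level_index_mono a (level_path_mono st (i := 0) (j := n) ltac:(lia)).
have := level_index_mono a (level_step_le (st n (ltnSn n))).
lia.
Qed.

(* Along a path of level steps, an [X]-run is flanked by levels [2k] and [2k+2]. *)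
Lemma level_xrun_flanks (F : nat -> nat) l len : (forall k, level_step (F k) (F k.+1)) ->
  level_sym (F l) != SX -> (forall k, k < len -> level_sym (F (l + k.+1)) = SX) ->
  level_sym (F (l + len.+1)) != SX -> 0 < len ->
  level_sym (F l) != level_sym (F (l + len.+1)).
Proof.
move=> st; rewrite !level_sym_eqX => Fl_even runX Fr_even len_gt0.
have run k : k < len -> F (l + k.+1) = (F l).+1.
  elim: k => [|k IH] lt_klen.
    have := runX 0 lt_klen; move/eqP; rewrite level_sym_eqX addn1.
    by have := st l; rewrite /level_step; lia.
  have := runX _ lt_klen; move/eqP; rewrite level_sym_eqX => odd_k.
  by have := IH (ltnW lt_klen); have := st (l + k.+1); rewrite /level_step -addnS; lia.
have last_run := run len.-1 ltac:(lia); rewrite prednK // in last_run.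
have := st (l + len); rewrite -addnS /level_step last_run => step_end.
have -> : F (l + len.+1) = (F l).+2 by lia.
have [F0|F2] := boolP (F l %% 4 == 0).
  rewrite (level_symb (eqP F0)) (@level_symfb (F l).+2); last lia.
  by rewrite eq_sym fb_neq_b.
by rewrite (@level_symfb (F l)) ?(@level_symb (F l).+2) ?fb_neq_b //; lia.
Qed.

End LevelSymbols.

Section CyclicAccess.
Variables (N : nat) (s : N.-tuple sym).
Hypothesis N_gt0 : 0 < N.
Local Notation ns i := (nth SX s i).

Lemma cyc_small k : k < N -> cyc s k = ns k.
Proof. by move=> ltkN; rewrite /cyc modn_small. Qed.

Lemma cyc_pred j : 0 < j < N -> cyc s (j + N - 1) = ns j.-1.
Proof.
move=> j_range; rewrite /cyc.
have -> : j + N - 1 = j.-1 + N by lia.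
by rewrite modnDr modn_small //; lia.
Qed.

Lemma cyc_pred0 : cyc s (0 + N - 1) = ns N.-1.
Proof. have -> : 0 + N - 1 = N.-1 by lia. by rewrite /cyc modn_small //; lia. Qed.

Lemma cycDN k : cyc s (k + N) = cyc s k.
Proof. by rewrite /cyc modnDr. Qed.

Lemma nblocks_count a : ~~ all (fun c => c == a) s ->
  nblocks a s = ((ns 0 == a) && (ns N.-1 != a)) +
                count (fun j => (ns j == a) && (ns j.-1 != a)) (iota 1 N.-1).
Proof.
move=> not_const; rewrite /nblocks (negbTE not_const) andbF.
have -> : iota 0 N = 0 :: iota 1 N.-1 by case: (N) N_gt0.
rewrite /= cyc_small // cyc_pred0; congr addn.
by apply: eq_in_count => j; rewrite mem_iota => j_range; rewrite cyc_small ?cyc_pred //; lia.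
Qed.

End CyclicAccess.

Definition block_start (s : seq sym) j := is_bit (nth SX s j) && (nth SX s j.-1 != nth SX s j).

Definition levels_of (s : seq sym) i := 2 * count (block_start s) (iota 1 i) + (nth SX s i == SX).

Lemma count_block_startsS (s : seq sym) i :
  count (block_start s) (iota 1 i.+1) = count (block_start s) (iota 1 i) + block_start s i.+1.
Proof.
have -> : iota 1 i.+1 = rcons (iota 1 i) i.+1 by rewrite -cats1 -(addn1 i) iotaD addnC.
by rewrite -cats1 count_cat /= addn0.
Qed.

Lemma levels_of_step (s : seq sym) i : level_step (levels_of s i) (levels_of s i.+1).
Proof.
rewrite /levels_of count_block_startsS /block_start /=.
move: (count _ _) (nth SX s i) (nth SX s i.+1) => c x y.
by case: x; case: y; rewrite /level_step /=; lia.
Qed.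

(** * Strings with ends in [b] as level paths *)

Section Strbb.
Variables (N M : nat) (b : sym).

Local Notation sym_of := (level_sym b).

Definition Strbb (bar : bool) (s : N.-tuple sym) : bool :=
  if bar then is_Str M s && ((sfirst s, slast s) \in [:: (b, b); (b, SX); (SX, b)])
  else [&& is_Str M s, sfirst s == b & slast s == b].

Definition level_path (d : nat -> nat) := forall i, i < N.-1 -> level_step (d i) (d i.+1).

Definition level_ends (bar : bool) (d : nat -> nat) :=
  if bar then [|| (d 0 == 0) && (d N.-1 == 4 * M), (d 0 == 0) && (d N.-1 == (4 * M).-1)
               | (d 0 == 1) && (d N.-1 == 4 * M)]
  else (d 0 == 0) && (d N.-1 == 4 * M).

Lemma level_ends_bounds bar d : level_ends bar d -> d 0 <= 1 /\ (4 * M).-1 <= d N.-1 <= 4 * M.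
Proof. by rewrite /level_ends; case: bar; lia. Qed.

Lemma size_str_of_levels d : size (map (fun i => sym_of (d i)) (iota 0 N)) == N.
Proof. by rewrite size_map size_iota. Qed.

Definition str_of_levels d : N.-tuple sym := Tuple (size_str_of_levels d).

Lemma nth_str_of_levels d i : i < N -> nth SX (str_of_levels d) i = sym_of (d i).
Proof. by move=> ltiN; rewrite /= (nth_map 0) ?size_iota // nth_iota. Qed.

Hypothesis b_bit : is_bit b.

Let fb_neq_b : (flip b == b) = false. Proof. exact/negbTE/flip_neq. Qed.
Let fb_bit : is_bit (flip b). Proof. by rewrite is_bit_flip. Qed.

Section Path.
Variables (bar : bool) (d : nat -> nat).
Hypotheses (M_gt0 : 0 < M) (d_path : level_path d) (d_ends : level_ends bar d).
Local Notation s := (str_of_levels d).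

Let d_bounds := level_ends_bounds d_ends.
Let N_gt0 : 0 < N. Proof. by case: N d_bounds => //= -[]; lia. Qed.

Lemma str_of_levels_not_const a : (a == b) || (a == flip b) -> ~~ all (fun c => c == a) s.
Proof.
move=> ab; apply/negP => /all_nthP const_a; have [d0 dN] := d_bounds.
have sym_a j : j < N -> sym_of (d j) = a.
  by move=> ltjN; apply/eqP; rewrite -nth_str_of_levels // const_a // size_tuple.
case/orP: ab => /eqP a_eq.
  have := count_level_starts (n := N.-1) b_bit d_path (introT orP (or_intror (eqxx (flip b)))).
  rewrite /level_index fb_neq_b (@eq_in_count _ _ pred0) ?count_pred0.
    by lia.
  move=> j; rewrite mem_iota => j_range /=; rewrite sym_a; last lia.
  by rewrite a_eq eq_sym fb_neq_b.
have := sym_a 0 N_gt0; move/eqP; rewrite a_eq level_sym_eqfb //; lia.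
Qed.

Lemma nblocks_str_of_levels a : (a == b) || (a == flip b) -> nblocks a s = M.
Proof.
move=> ab; rewrite nblocks_count ?str_of_levels_not_const //.
rewrite (@eq_in_count _ _ (fun j => (sym_of (d j) == a) && (sym_of (d j.-1) != a))); last first.
  by move=> j; rewrite mem_iota => j_range; rewrite !nth_str_of_levels //; lia.
rewrite count_level_starts // !nth_str_of_levels //; last lia.
move: d_ends; rewrite /level_ends /level_index; case/orP: ab => /eqP ->.
  by rewrite eqxx !level_sym_eqb //; case: bar; lia.
by rewrite fb_neq_b !level_sym_eqfb //; case: bar; lia.
Qed.

(* One turn around the circle climbs [4 M] levels. *)
Definition cyclic_levels k := d (k %% N) + 4 * (M * (k %/ N)).

Lemma cyc_str_of_levels k : cyc s k = sym_of (cyclic_levels k).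
Proof. by rewrite /cyc /cyclic_levels level_symD4 nth_str_of_levels // ltn_pmod. Qed.

Lemma cyclic_levels_step k : level_step (cyclic_levels k) (cyclic_levels k.+1).
Proof.
rewrite /cyclic_levels; have ltkN := ltn_pmod k N_gt0.
have [ltSkN|] := ltnP (k %% N).+1 N.
  have eq_mod : k.+1 %% N = (k %% N).+1 by rewrite -addn1 -modnDml addn1 modn_small.
  have eq_div : k.+1 %/ N = k %/ N by rewrite divnS // /dvdn eq_mod.
  by rewrite eq_mod eq_div; have := d_path (i := k %% N) ltac:(lia); rewrite /level_step; lia.
move=> geSkN; have k_last : k %% N = N.-1 by lia.
have eq_mod : k.+1 %% N = 0 by rewrite -addn1 -modnDml k_last addn1 prednK // modnn.
have eq_div : k.+1 %/ N = (k %/ N).+1 by rewrite divnS // /dvdn eq_mod.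
rewrite eq_mod eq_div k_last; move: d_ends; rewrite /level_ends /level_step.
by case: bar; lia.
Qed.

Lemma xblocks_ok_str_of_levels : xblocks_ok s.
Proof.
apply/andP; split.
  apply/hasP; have [k [ltkN dk]] : exists k, k < N /\ d k %% 4 = 0.
    move: d_ends; rewrite /level_ends; case: bar => [/or3P[]|] /andP[/eqP d0 /eqP dN].
    - by exists 0; rewrite d0.
    - by exists 0; rewrite d0.
    - by exists N.-1; rewrite dN; split; lia.
    - by exists 0; rewrite d0.
  by exists (nth SX s k); [rewrite mem_nth ?size_tuple | rewrite nth_str_of_levels // level_symb].
apply/allP => i _; apply/allP => len; rewrite mem_iota => len_range.
apply/implyP => /and3P[pred_bit /allP run_X succ_bit].
have shift k : cyc s (i + k) = sym_of (cyclic_levels (i + N.-1 + k.+1)).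
  by rewrite -cyc_str_of_levels (_ : i + N.-1 + k.+1 = i + k + N) ?cycDN //; lia.
have -> : i + N - 1 = i + N.-1 by lia.
rewrite cyc_str_of_levels shift; apply: level_xrun_flanks => //; first exact: cyclic_levels_step.
- by rewrite -cyc_str_of_levels -(_ : i + N - 1 = i + N.-1) //; lia.
- move=> k ltklen; rewrite -shift; apply/eqP/run_X; rewrite mem_iota; lia.
- by rewrite -shift.
- lia.
Qed.

Lemma str_of_levels_Strbb : Strbb bar s.
Proof.
have nb a : (a == b) || (a == flip b) -> nblocks a s == M.
  by move=> ab; rewrite nblocks_str_of_levels.
have s_Str : is_Str M s.
  rewrite /is_Str xblocks_ok_str_of_levels andbT.
  by case: b b_bit nb => // _ nb; rewrite !nb ?eqxx ?orbT.
have sym0 : sym_of 0 = b by rewrite level_symb.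
have sym1 : sym_of 1 = SX by rewrite level_symX.
have sym4M : sym_of (4 * M) = b by rewrite level_symb //; lia.
have sym4M1 : sym_of (4 * M).-1 = SX by rewrite level_symX //; lia.
rewrite /Strbb s_Str /sfirst /slast !nth_str_of_levels //; last lia.
move: d_ends; rewrite /level_ends.
by case: bar => [/or3P[]|] /andP[/eqP -> /eqP ->];
  rewrite ?sym0 ?sym1 ?sym4M ?sym4M1 ?inE ?eqxx ?orbT.
Qed.

End Path.

Section StrbbString.
Variables (bar : bool) (s : N.-tuple sym).
Hypothesis s_Strbb : Strbb bar s.
Local Notation ns i := (nth SX s i).

Lemma Strbb_parts : [/\ is_Str M s, (ns 0 == b) || (bar && (ns 0 == SX)),
  (ns N.-1 == b) || (bar && (ns N.-1 == SX)) & ~~ ((ns 0 == SX) && (ns N.-1 == SX))].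
Proof.
move: s_Strbb; rewrite /Strbb /sfirst /slast; case: bar.
  case/andP => s_Str; rewrite !inE !xpair_eqE.
  by case/or3P => /andP[/eqP -> /eqP ->]; rewrite s_Str ?eqxx ?orbT ?(negbTE b_bit).
by case/and3P => s_Str /eqP -> /eqP ->; rewrite s_Str eqxx (negbTE b_bit).
Qed.

Let N_gt0 : 0 < N.
Proof.
case: Strbb_parts => /and3P[_ _ /andP[has_bit _]] _ _ _.
by rewrite -(size_tuple s); case: (tval s) has_bit.
Qed.

Lemma Strbb_nblocks a : (a == b) || (a == flip b) -> nblocks a s = M.
Proof.
case: Strbb_parts => /and3P[nb0 nb1 _] _ _ _.
by case: b b_bit => // _ /orP[] /eqP ->; apply/eqP.
Qed.

Lemma Strbb_first_neq_fb : (ns 0 == flip b) = false.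
Proof.
case: Strbb_parts => _ /orP[/eqP ->|/andP[_ /eqP ->]] _ _; first by rewrite eq_sym fb_neq_b.
by rewrite eq_sym (negbTE fb_bit).
Qed.

Fixpoint last_bit i := if i is i'.+1 then (if is_bit (ns i) then ns i else last_bit i') else b.

Local Notation pred_sym l := (cyc s (l + N - 1)).

(* Bits alternate at block starts; an [X] sits in an [X]-run headed by the last bit seen. *)
Definition levels_inv i := [/\ last_bit i = bit_of_parity b (count (block_start s) (iota 1 i)),
  is_bit (ns i) -> ns i = last_bit i &
  ns i = SX -> exists2 l, l <= i /\ (forall k, l <= k <= i -> ns k = SX)
                        & is_bit (pred_sym l) /\ pred_sym l = last_bit i].

Lemma levels_inv0 : levels_inv 0.
Proof.
case: Strbb_parts => _ s0 sN not_both_X; split => //.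
  by case/orP: s0 => [/eqP ->|/andP[_ /eqP ->]].
move=> s0X; exists 0; first by split => // k; rewrite leqn0 => /eqP ->.
rewrite cyc_pred0 //; move: sN not_both_X; rewrite s0X eqxx /=.
by case/orP => [/eqP ->|/andP[_ /eqP ->]] //; rewrite eqxx.
Qed.

Lemma xrun_flanks_differ l i : l <= i -> i.+1 < N -> (forall k, l <= k <= i -> ns k = SX) ->
  is_bit (pred_sym l) -> is_bit (ns i.+1) -> ns i.+1 != pred_sym l.
Proof.
move=> le_li ltiN runX pred_bit next_bit.
have ok_l : l \in iota 0 N by rewrite mem_iota; lia.
have ok_len : i.+1 - l \in iota 1 N by rewrite mem_iota; lia.
case: Strbb_parts => /and3P[_ _ /andP[_ /allP /(_ l ok_l) /allP /(_ _ ok_len) /implyP flanks]]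
  _ _ _.
have next : cyc s (l + (i.+1 - l)) = ns i.+1.
  by rewrite (_ : l + (i.+1 - l) = i.+1) ?cyc_small //; lia.
rewrite -next eq_sym; apply: flanks; apply/and3P; split; rewrite ?next //.
by apply/allP => k; rewrite mem_iota => k_range; rewrite cyc_small ?runX //; lia.
Qed.

Lemma levels_invS i : i.+1 < N -> levels_inv i -> levels_inv i.+1.
Proof.
move=> ltiN [last_i bit_i X_i].
rewrite /levels_inv count_block_startsS /= /block_start.
have [nextX|next_bit] := eqVneq (ns i.+1) SX.
  rewrite nextX /= addn0; split => // _.
  have [iX|i_bit] := eqVneq (ns i) SX.
    have [l [le_li runX] pred_l] := X_i iX; exists l => //; split; first lia.
    by move=> k k_range; have [->//|ne] := eqVneq k i.+1; apply: runX; lia.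
  exists i.+1; first by split => // k; rewrite -eqn_leq => /eqP <-.
  by rewrite cyc_pred //= -bit_i.
have next_is_bit : is_bit (ns i.+1) := next_bit.
rewrite next_is_bit /=; split => //; last by move/eqP; rewrite (negbTE next_bit).
have [same|changed] := eqVneq (ns i) (ns i.+1); rewrite /= ?addn0 ?addn1.
  by rewrite -last_i -bit_i same.
rewrite bit_of_paritySn -last_i; apply: bits_neq_flip => //.
  by rewrite last_i /bit_of_parity; case: (odd _).
have [iX|i_bit] := eqVneq (ns i) SX.
  have [l [le_li runX] [pred_bit <-]] := X_i iX.
  exact: xrun_flanks_differ.
by rewrite -(bit_i i_bit) eq_sym.
Qed.

Lemma levels_of_sym i : i < N -> ns i = level_sym b (levels_of s i).
Proof.
have inv k : k < N -> levels_inv k.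
  by elim: k => [_|k IH ltkN]; [exact: levels_inv0 | apply: levels_invS (IH (ltnW ltkN))].
move=> ltiN; have [last_i bit_i _] := inv i ltiN; rewrite /levels_of.
have [iX|i_bit] := eqVneq (ns i) SX; first by rewrite iX level_symX //; lia.
by rewrite addn0 level_sym_double //; exact: etrans (bit_i i_bit) last_i.
Qed.

Section Ends.
Hypothesis M_gt0 : 0 < M.

Lemma Strbb_not_const a : (a == b) || (a == flip b) -> ~~ all (fun c => c == a) s.
Proof.
case/orP => /eqP -> {a}; apply/negP => /all_nthP const; last first.
  by have := const SX 0; rewrite size_tuple Strbb_first_neq_fb => /(_ N_gt0).
have not_const_fb : ~~ all (fun c => c == flip b) s.
  by apply/negP => /(all_nthP SX) /(_ 0); rewrite size_tuple Strbb_first_neq_fb => /(_ N_gt0).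
have := Strbb_nblocks (introT orP (or_intror (eqxx (flip b)))).
rewrite nblocks_count // Strbb_first_neq_fb /= (@eq_in_count _ _ pred0) ?count_pred0; first lia.
move=> j; rewrite mem_iota => j_range /=.
have ltj : j < size s by rewrite size_tuple; lia.
by rewrite (eqP (const SX j ltj)) eq_sym fb_neq_b.
Qed.

Lemma count_block_starts_Strbb :
  count (block_start s) (iota 1 N.-1) = (M - ((ns 0 == b) && (ns N.-1 != b))) + M.
Proof.
pose starts a j := (ns j == a) && (ns j.-1 != a).
have nblocks_starts a : (a == b) || (a == flip b) ->
    M = ((ns 0 == a) && (ns N.-1 != a)) + count (starts a) (iota 1 N.-1).
  by move=> ab; rewrite -(Strbb_nblocks ab) nblocks_count ?Strbb_not_const.
have := count_predUI (starts b) (starts (flip b)) (iota 1 N.-1).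
rewrite (@eq_count _ (predI _ _) pred0) ?count_pred0; last first.
  by move=> j; rewrite /= /starts; case: eqP => // ->; rewrite [b == _]eq_sym fb_neq_b andbF.
rewrite (@eq_count _ (predU _ _) (block_start s)); last first.
  by move=> j; rewrite /= /starts /block_start (bit_change_split _ _ b_bit).
have := nblocks_starts b; have := nblocks_starts (flip b).
rewrite Strbb_first_neq_fb !eqxx orbT /=.
lia.
Qed.

Lemma levels_of_ends : level_ends bar (levels_of s).
Proof.
case: Strbb_parts => _ s0 sN not_both_X.
rewrite /level_ends /levels_of count_block_starts_Strbb /=.
move: s0 sN not_both_X; move: (ns 0) (ns N.-1) => x y.
by case: bar; case: b b_bit => // _; case: x; case: y; rewrite /= ?eqxx //=; lia.
Qed.

End Ends.
End StrbbString.

Definition raise m (s : N.-tuple sym) : N.-tuple sym :=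
  str_of_levels (fun i => maxn (levels_of s i) (minn (2 * i) m)).

Lemma raise_le_raiseS m s : ~~ odd m -> str_le (raise m s) (raise m.+1 s).
Proof.
move=> m_even; apply/str_leP => i ltiN; rewrite !nth_str_of_levels // sym_le_level //.
by have := modn2 m; rewrite (negbTE m_even) /level_le; lia.
Qed.

Lemma raiseS_le_raise m s : odd m -> str_le (raise m.+1 s) (raise m s).
Proof.
move=> m_odd; apply/str_leP => i ltiN; rewrite !nth_str_of_levels // sym_le_level //.
by have := modn2 m; rewrite m_odd /level_le; lia.
Qed.

Lemma raise0 bar s : Strbb bar s -> raise 0 s = s.
Proof.
move=> Ss; apply: eq_from_tnth => i; rewrite !(tnth_nth SX) nth_str_of_levels //.
by rewrite (levels_of_sym Ss) //; congr level_sym; lia.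
Qed.

Definition staircase : N.-tuple sym := str_of_levels (fun i => minn (2 * i) (4 * M)).

Section Raise.
Hypothesis M_gt0 : 0 < M.

Lemma levels_of_near bar p q : Strbb bar p -> Strbb bar q -> str_le p q ->
  forall i, i < N -> level_near (levels_of p i) (levels_of q i).
Proof.
move=> Sp Sq /str_leP le_pq i ltiN.
have [p0 pN] := level_ends_bounds (levels_of_ends Sp M_gt0).
have [q0 qN] := level_ends_bounds (levels_of_ends Sq M_gt0).
apply: (level_paths_near (n := N.-1)); try lia; try by move=> j _; apply: levels_of_step.
move=> j le_jN; rewrite -(sym_le_level b_bit) -(levels_of_sym Sp) -?(levels_of_sym Sq); try lia.
by apply: le_pq; lia.
Qed.

Lemma raise_Strbb bar m s : m <= 4 * M -> Strbb bar s -> Strbb bar (raise m s).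
Proof.
move=> le_m Ss; apply: str_of_levels_Strbb => //.
  by move=> i _; have := levels_of_step s i; rewrite /level_step; lia.
by move: (levels_of_ends Ss M_gt0); rewrite /level_ends; case: bar {Ss}; lia.
Qed.

Lemma raise_mono bar m p q : Strbb bar p -> Strbb bar q -> str_le p q ->
  str_le (raise m p) (raise m q).
Proof.
move=> Sp Sq le_pq; apply/str_leP => i ltiN.
rewrite !nth_str_of_levels // sym_le_level //.
by have := levels_of_near Sp Sq le_pq ltiN; rewrite /level_near /level_le; lia.
Qed.

Lemma staircase_Strbb bar : 2 * M < N -> Strbb bar staircase.
Proof.
move=> MN; apply: str_of_levels_Strbb => //; first by move=> i _; rewrite /level_step; lia.
by rewrite /level_ends; case: bar; lia.
Qed.

Lemma staircase_le_raise bar s : Strbb bar s -> str_le staircase (raise (4 * M) s).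
Proof.
move=> Ss; apply/str_leP => i ltiN; rewrite !nth_str_of_levels // sym_le_level //.
have [s0 sN] := level_ends_bounds (levels_of_ends Ss M_gt0).
have s_path j : j < N.-1 -> level_step (levels_of s j) (levels_of s j.+1).
  by move=> _; apply: levels_of_step.
have le_sN := level_path_mono s_path (i := i) (j := N.-1) ltac:(lia).
have le_2i : 0 < i -> levels_of s i <= 2 * i.
  elim: i {ltiN le_sN} => // i IH _; have := levels_of_step s i; rewrite /level_step.
  by case: (posnP i) => [->|i_gt0]; [|have := IH i_gt0]; lia.
by case: (posnP i) => [->|/le_2i]; rewrite /level_le; lia.
Qed.

End Raise.

End Strbb.

Section StrbbContractible.
Variables (R : realType) (N M : nat) (b : sym) (bar : bool).
Hypotheses (b_bit : is_bit b) (M_gt0 : 0 < M) (MN : 2 * M < N).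

Lemma Strbb_contractible : contractible R (@realization R _ (Strbb M b bar) (@str_le N)).
Proof.
pose h k : N.-tuple sym -> N.-tuple sym := if k <= 4 * M then raise b k else fun=> staircase N M b.
apply: (@realization_contractible_zigzag _ _ _ _ (@str_le_refl N) (@str_le_trans N)
          (@str_le_anti N) h (4 * M).+1 (staircase N M b)); rewrite /h.
- move=> k s Ss; case: ifP => [le_k|_]; first exact: (raise_Strbb b_bit M_gt0 le_k Ss).
  exact: (staircase_Strbb b_bit M_gt0 bar MN).
- move=> k s s' Ss Ss' le_ss'; case: ifP => _; last exact: str_le_refl.
  exact: (raise_mono b_bit M_gt0 k Ss Ss' le_ss').
- by move=> s Ss; rewrite leq0n (raise0 b_bit Ss).
- by move=> s _; rewrite ltnn.
- exact: (staircase_Strbb b_bit M_gt0 bar MN).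
- move=> k; rewrite ltnS => le_k; rewrite le_k.
  have [-> | ne_k] := eqVneq k (4 * M).
    by right; move=> s Ss; rewrite ltnn; exact: (staircase_le_raise b_bit M_gt0 Ss).
  rewrite ltn_neqAle ne_k le_k; have [k_odd|k_even] := boolP (odd k).
    by right; move=> s _; exact: (raiseS_le_raise b_bit s k_odd).
  by left; move=> s _; exact: (raise_le_raiseS b_bit s k_even).
Qed.

End StrbbContractible.

Theorem proposition5p5 (R : realType) (N M : nat) :
  (0 < M)%N -> (2 * M < N)%N ->
  [/\ contractible R (@realization R _ (@Str00 N M) (@str_le N)),
      contractible R (@realization R _ (@Str00bar N M) (@str_le N)),
      contractible R (@realization R _ (@Str11 N M) (@str_le N))
    & contractible R (@realization R _ (@Str11bar N M) (@str_le N))].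
Proof.
move=> M_gt0 MN; split.
- exact: (@Strbb_contractible R N M S0 false isT M_gt0 MN).
- exact: (@Strbb_contractible R N M S0 true isT M_gt0 MN).
- exact: (@Strbb_contractible R N M S1 false isT M_gt0 MN).
- exact: (@Strbb_contractible R N M S1 true isT M_gt0 MN).
Qed.
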